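(* In the setting described in the context, let $U_0,\dots,U_d$ be one of the six decompositions below, with $U_{-1}=U_{d+1}=0$. Then for $0\le i\le d$: $[0D]$: $(B-bq^{d-2i}I)U_i\subseteq U_{i-1}$ and $(B^*-b^*q^{d-2i}I)U_i\subseteq U_{i+1}$; $[0^*D^*]$: $(B-bq^{2i-d}I)U_i\subseteq U_{i-1}$ and $(B^*-b^*q^{2i-d}I)U_i\subseteq U_{i+1}$; $[0^*D]$: $(B-bq^{2i-d}I)U_i\subseteq U_{i-1}$ and $(B^*-b^*q^{d-2i}I)U_i\subseteq U_{i+1}$; $[0^*0]$: $(B-bq^{2i-d}I)U_i=0$ and $B^*U_i\subseteq U_{i-1}+U_i+U_{i+1}$; $[D^*0]$: $(B-bq^{2i-d}I)U_i\subseteq U_{i+1}$ and $(B^*-b^*q^{d-2i}I)U_i\subseteq U_{i-1}$; $[D^*D]$: $BU_i\subseteq U_{i-1}+U_i+U_{i+1}$ and $(B^*-b^*q^{d-2i}I)U_i=0$.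
   Context: $\mathbb K$ is an algebraically closed field, $q\in\mathbb K$ nonzero and not a root of unity, $V$ a nonzero finite-dimensional $\mathbb K$-vector space. A tridiagonal pair on $V$ is an ordered pair $A,A^*$ of linear maps $V\to V$ such that: (i) each of $A,A^*$ is diagonalizable; (ii) there is an ordering $V_0,\dots,V_d$ of the eigenspaces of $A$ with $A^*V_i\subseteq V_{i-1}+V_i+V_{i+1}$ ($V_{-1}=V_{d+1}=0$); (iii) there is an ordering $V^*_0,\dots,V^*_\delta$ of the eigenspaces of $A^*$ with $AV^*_i\subseteq V^*_{i-1}+V^*_i+V^*_{i+1}$ ($V^*_{-1}=V^*_{\delta+1}=0$); (iv) no subspace $W\ne0,V$ satisfies $AW\subseteq W$, $A^*W\subseteq W$. It is known $d=\delta$; orderings as in (ii),(iii) are called standard. Setting: $A,A^*$ is a tridiagonal pair on $V$; $V_0,\dots,V_d$ (resp. $V^*_0,\dots,V^*_d$) is a standard ordering of the eigenspaces of $A$ (resp. $A^*$); the eigenvalue of $A$ on $V_i$ is $aq^{2i-d}$ and that of $A^*$ on $V^*_i$ is $a^*q^{d-2i}$ for some nonzero $a,a^*\in\mathbb K$; $b,b^*\in\mathbb K$ are nonzero. The six decompositions of $V$ (sequences of nonzero subspaces whose sum is direct and equals $V$) are, for $0\le i\le d$: $[0D]$: $U_i=V_i$; $[0^*D^*]$: $U_i=V^*_i$; $[0^*D]$: $U_i=(V^*_0+\cdots+V^*_i)\cap(V_i+\cdots+V_d)$; $[0^*0]$: $U_i=(V^*_0+\cdots+V^*_i)\cap(V_0+\cdots+V_{d-i})$;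 $[D^*0]$: $U_i=(V^*_{d-i}+\cdots+V^*_d)\cap(V_0+\cdots+V_{d-i})$; $[D^*D]$: $U_i=(V^*_{d-i}+\cdots+V^*_d)\cap(V_i+\cdots+V_d)$. $B:V\to V$ is the linear map acting as $bq^{2i-d}I$ on the $i$th subspace of $[0^*0]$ for each $i$, and $B^*:V\to V$ is the linear map acting as $b^*q^{d-2i}I$ on the $i$th subspace of $[D^*D]$ for each $i$. *)

From HB Require Import structures.
From mathcomp Require Import all_boot all_order all_algebra.
Set Implicit Arguments. Unset Strict Implicit. Unset Printing Implicit Defensive.
Import Order.TTheory GRing.Theory Num.Theory.
Local Open Scope ring_scope.
Local Open Scope vspace_scope.

Section TDDefs.
Variables (K : fieldType) (V : vectType K).

Definition eigsp (A : 'End(V)) (th : K) : {vspace V} := lker (A - th *: \1)%VF.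

Definition diagonalizable (A : 'End(V)) : Prop :=
  exists s : seq K, (\sum_(t <- s) eigsp A t)%VS = fullv.

Definition eig_ordering (A : 'End(V)) (d : nat) (Vs : nat -> {vspace V}) : Prop :=
  [/\ (forall i, (i <= d)%N -> exists th, Vs i = eigsp A th /\ Vs i != 0%VS),
      (forall i j, (i <= d)%N -> (j <= d)%N -> Vs i = Vs j -> i = j)
    & (forall th, eigsp A th != 0%VS ->
          exists2 i, (i <= d)%N & Vs i = eigsp A th)].

Definition Uat (U : nat -> {vspace V}) (d i : nat) : {vspace V} :=
  if (i <= d)%N then U i else 0%VS.
Definition Uprev (U : nat -> {vspace V}) (d i : nat) : {vspace V} :=
  if i is k.+1 then Uat U d k else 0%VS.
Definition Unext (U : nat -> {vspace V}) (d i : nat) : {vspace V} :=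
  Uat U d i.+1.

Definition tridiag (X : 'End(V)) (d : nat) (U : nat -> {vspace V}) : Prop :=
  forall i, (i <= d)%N -> (X @: U i <= Uprev U d i + U i + Unext U d i)%VS.

Definition standard_orderings (A As : 'End(V)) (d : nat)
    (Vs Vss : nat -> {vspace V}) : Prop :=
  [/\ eig_ordering A d Vs, eig_ordering As d Vss,
      tridiag As d Vs & tridiag A d Vss].

Definition TD_pair (A As : 'End(V)) : Prop :=
  [/\ diagonalizable A, diagonalizable As,
      exists d Vs, eig_ordering A d Vs /\ tridiag As d Vs,
      exists delta Vss, eig_ordering As delta Vss /\ tridiag A delta Vss
    & forall W : {vspace V}, (A @: W <= W)%VS -> (As @: W <= W)%VS ->
        W = 0%VS \/ W = fullv].

Definition dec_0D (Vs Vss : nat -> {vspace V}) (d i : nat) := Vs i.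
Definition dec_0sDs (Vs Vss : nat -> {vspace V}) (d i : nat) := Vss i.
Definition dec_0sD (Vs Vss : nat -> {vspace V}) (d i : nat) :=
  ((\sum_(j < i.+1) Vss j) :&: (\sum_(i <= j < d.+1) Vs j))%VS.
Definition dec_0s0 (Vs Vss : nat -> {vspace V}) (d i : nat) :=
  ((\sum_(j < i.+1) Vss j) :&: (\sum_(j < (d - i).+1) Vs j))%VS.
Definition dec_Ds0 (Vs Vss : nat -> {vspace V}) (d i : nat) :=
  ((\sum_(d - i <= j < d.+1) Vss j) :&: (\sum_(j < (d - i).+1) Vs j))%VS.
Definition dec_DsD (Vs Vss : nat -> {vspace V}) (d i : nat) :=
  ((\sum_(d - i <= j < d.+1) Vss j) :&: (\sum_(i <= j < d.+1) Vs j))%VS.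

End TDDefs.

Definition qpow (K : fieldType) (q : K) (d i : nat) : K :=
  q ^ ((2 * i)%:Z - d%:Z).

Definition qpowr (K : fieldType) (q : K) (d i : nat) : K :=
  q ^ (d%:Z - (2 * i)%:Z).

From Pilot Require Import Defs.
From HB Require Import structures.
From mathcomp Require Import all_boot all_order all_algebra.
From mathcomp Require Import zify ring.
Import Order.TTheory GRing.Theory Num.Theory.
Local Open Scope ring_scope.
Set Implicit Arguments. Unset Strict Implicit. Unset Printing Implicit Defensive.

(* On each of the decompositions [0*0] and [D*D], A - θ acts as a raising map and A* - θ* as
   a lowering map, so by irreducibility each of them sums to V. As B is diagonal on [0*0] and
   B* on [D*D], comparing actions yields the q-Weyl relations
     q A B - q^-1 B A = (q - q^-1) a b,        q^-1 A* B - q B A* = (q^-1 - q) a* b,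
     q^-1 A B* - q B* A = (q^-1 - q) a b*,     q A* B* - q^-1 B* A* = (q - q^-1) a* b*.
   A relation r X Y - r^-1 Y X = (r - r^-1) k makes Y - k/θ map the θ-eigenspace of X into
   its r^-2 θ-eigenspace; hence B lowers and B* raises both V_0, ..., V_d and V*_0, ..., V*_d.
   The claims for [0*D] and [D*0] follow by intersecting the flags. The tridiagonality claims
   also need the thin intersections (V*_0 + ... + V*_i) ∩ (V_0 + ... + V_(d-i-1)) and
   (V*_(d-i) + ... + V*_d) ∩ (V_(i+1) + ... + V_d) to vanish: in i, they form A-raising and
   A*-lowering families whose sums lie in V_0 + ... + V_(d-1) (resp. V_1 + ... + V_d), so
   irreducibility forces them to 0. *)

Section Subspaces.
Variables (K : fieldType) (V : vectType K).
Implicit Types (f X : 'End(V)) (U S F G L M H : {vspace V}).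

Lemma limg_subvP f U S : reflect (forall u, u \in U -> f u \in S) (f @: U <= S)%VS.
Proof.
apply: (iffP idP) => [fUS u Uu | fUS]; first exact: subvP fUS _ (memv_img f Uu).
by apply/subvP => _ /memv_imgP[u Uu ->]; apply: fUS.
Qed.

Lemma limg_subv_preim f U S : (f @: U <= S)%VS = (U <= f @^-1: S)%VS.
Proof.
apply/limg_subvP/subvP => fUS u Uu; first by rewrite -memv_preim fUS.
by rewrite memv_preim fUS.
Qed.

Lemma shift_lfunE f c v : (f - c *: \1)%VF v = f v - c *: v.
Proof. by rewrite add_lfunE opp_lfunE scale_lfunE id_lfunE. Qed.

Lemma limg_shift f [c : K] U S :
  (f @: U <= S)%VS -> (U <= S)%VS -> ((f - c *: \1)%VF @: U <= S)%VS.
Proof.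
move=> /limg_subvP fUS /subvP US; apply/limg_subvP => u Uu.
by rewrite shift_lfunE memvB ?memvZ ?fUS ?US.
Qed.

Lemma limg_unshift f c U S :
  ((f - c *: \1)%VF @: U <= S)%VS -> (f @: U <= U + S)%VS.
Proof.
move=> /limg_subvP fUS; apply/limg_subvP => u Uu.
rewrite -(subrK (c *: u) (f u)) addrC -shift_lfunE.
by rewrite memv_add ?memvZ ?fUS.
Qed.

Lemma eigspP f t v : reflect (f v = t *: v) (v \in eigsp f t).
Proof. by rewrite memv_ker shift_lfunE subr_eq0; apply: eqP. Qed.

Lemma limg_shift_eq0 f c U :
  (forall u, u \in U -> f u = c *: u) -> ((f - c *: \1)%VF @: U = 0)%VS.
Proof.
move=> fU; apply/eqP; rewrite -subv0; apply/limg_subvP => u Uu.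
by rewrite shift_lfunE fU // subrr mem0v.
Qed.

Lemma limg_capS f F G F' G' :
  (f @: F <= F')%VS -> (f @: G <= G')%VS -> (f @: (F :&: G) <= F' :&: G')%VS.
Proof. by move=> fF fG; apply: subv_trans (limg_cap f F G) (capvS fF fG). Qed.

Lemma capv_sub_middle L M H F G :
  (L + M + H)%VS = fullv -> (L + M <= F)%VS -> (M <= G)%VS ->
  (F :&: H = 0)%VS -> (L :&: G = 0)%VS -> (F :&: G <= M)%VS.
Proof.
move=> LMH LM_F MG FH0 LG0; apply/subvP => x /memv_capP[Fx Gx].
have : x \in (L + M + H)%VS by rewrite LMH memvf.
case/memv_addP=> y /memv_addP[l Ll [m Mm ->]] [h Hh xE].
have h0 : h = 0.
  apply/eqP; rewrite -memv0 -FH0 memv_cap Hh andbT.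
  have -> : h = x - (l + m) by rewrite xE addrC addKr.
  by rewrite memvB // (subvP LM_F) ?memv_add.
have l0 : l = 0.
  apply/eqP; rewrite -memv0 -LG0 memv_cap Ll /=.
  have -> : l = x - m by rewrite xE h0 addr0 addrK.
  by rewrite memvB // (subvP MG).
by rewrite xE h0 l0 addr0 add0r.
Qed.

Section Segments.
Variables (W : nat -> {vspace V}) (d : nat).

Definition segsum m n := (\sum_(m <= j < n) Uat W d j)%VS.

Lemma segsum_sub m n S :
  (forall j, (m <= j < n)%N -> (j <= d)%N -> (W j <= S)%VS) -> (segsum m n <= S)%VS.
Proof.
move=> WS; rewrite /segsum big_geq_mkord; apply/subv_sumP => j /= mj.
rewrite /Uat; case: ifP => jd; last exact: sub0v.
by apply: WS; rewrite ?mj ?ltn_ord.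
Qed.

Lemma limg_segsum f m n S :
  (forall j, (m <= j < n)%N -> (j <= d)%N -> (f @: W j <= S)%VS) ->
  (f @: segsum m n <= S)%VS.
Proof.
by move=> fWS; rewrite limg_subv_preim; apply: segsum_sub => j *; rewrite -limg_subv_preim fWS.
Qed.

Lemma segsum_sup m n j : (j <= d)%N -> (m <= j < n)%N -> (W j <= segsum m n)%VS.
Proof.
move=> jd /andP[mj jn]; rewrite /segsum big_geq_mkord.
by apply: (sumv_sup (Ordinal jn)) => //; rewrite /Uat jd.
Qed.

Lemma segsum_mono m n m' n' :
  (m' <= m)%N -> (minn n d.+1 <= n')%N -> (segsum m n <= segsum m' n')%VS.
Proof. by move=> *; apply: segsum_sub => j *; apply: segsum_sup => //; lia. Qed.

Lemma segsum_eq0 m n : (minn n d.+1 <= m)%N -> segsum m n = 0%VS.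
Proof. by move=> *; apply/eqP; rewrite -subv0; apply: segsum_sub => *; lia. Qed.

Lemma segsum_cat m n p : (m <= n)%N -> (n <= p)%N || (d < p)%N ->
  (segsum m n + segsum n p)%VS = segsum m p.
Proof.
move=> mn np; case: (leqP n p) => [np'|pn]; first by rewrite /segsum -big_cat_nat.
rewrite (@segsum_eq0 n p) ?addv0; last by lia.
by apply/eqP; rewrite eqEsubv !segsum_mono //; lia.
Qed.

Lemma sumv_segsum m n : (n <= d.+1)%N -> (\sum_(m <= j < n) W j)%VS = segsum m n.
Proof. by move=> nd; apply: eq_big_nat => j /andP[_ jn]; rewrite /Uat ifT //; lia. Qed.

Lemma sumv_ord_segsum n : (n <= d.+1)%N -> (\sum_(j < n) W j)%VS = segsum 0 n.
Proof. by move=> nd; rewrite -sumv_segsum // big_mkord. Qed.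

Lemma segsum1 j : (j <= d)%N -> segsum j j.+1 = W j.
Proof. by move=> jd; rewrite /segsum big_nat1 /Uat jd. Qed.

Lemma Uprev_segsum j : Uprev W d j = segsum j.-1 j.
Proof. by case: j => [|j]; rewrite /segsum /= ?big_nat1 ?big_geq. Qed.

Lemma Unext_segsum j : Unext W d j = segsum j.+1 j.+2.
Proof. by rewrite /segsum big_nat1. Qed.

Lemma segsum_around j : (j <= d)%N ->
  segsum j.-1 j.+2 = (Uprev W d j + W j + Unext W d j)%VS.
Proof.
move=> jd; rewrite Uprev_segsum -(segsum1 jd) Unext_segsum !segsum_cat //; lia.
Qed.

Lemma segsum_cap_around i F G : (i <= d)%N -> segsum 0 d.+1 = fullv ->
  (segsum 0 i.+2 <= F)%VS -> (segsum i.-1 d.+1 <= G)%VS ->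
  (F :&: segsum i.+2 d.+1 = 0)%VS -> (segsum 0 i.-1 :&: G = 0)%VS ->
  (F :&: G <= Uprev W d i + W i + Unext W d i)%VS.
Proof.
move=> iled Wfull LMF MHG FH0 LG0; rewrite -segsum_around //.
apply: capv_sub_middle FH0 LG0; first by rewrite !segsum_cat //; lia.
  by rewrite segsum_cat //; lia.
by apply: subv_trans MHG; apply: segsum_mono; lia.
Qed.

Lemma subv_Uprev j S : (j <= d)%N ->
  (forall k, j = k.+1 -> (S <= W k)%VS) -> (j = 0%N -> (S <= 0)%VS) -> (S <= Uprev W d j)%VS.
Proof. by case: j => [|k] /= kd Sk S0; rewrite ?S0 // /Uat ifT ?Sk //; lia. Qed.

Lemma subv_Unext j S :
  ((j < d)%N -> (S <= W j.+1)%VS) -> ((d <= j)%N -> (S <= 0)%VS) -> (S <= Unext W d j)%VS.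
Proof. by rewrite /Unext /Uat; case: ltnP => jd Sj S0; [apply: Sj | apply: S0]. Qed.

Definition lowering X (c : nat -> K) :=
  forall j, (j <= d)%N -> ((X - c j *: \1)%VF @: W j <= Uprev W d j)%VS.

Definition raising X (c : nat -> K) :=
  forall j, (j <= d)%N -> ((X - c j *: \1)%VF @: W j <= Unext W d j)%VS.

Definition scalar_on X (c : nat -> K) :=
  forall j, (j <= d)%N -> (W j <= eigsp X (c j))%VS.

Lemma scalar_on_shift_eq0 X c j : scalar_on X c -> (j <= d)%N -> ((X - c j *: \1)%VF @: W j = 0)%VS.
Proof. by move=> Xc jd; apply/eqP; rewrite -lkerE Xc. Qed.

Lemma tridiag_segsum X m n :
  tridiag X d W -> (X @: segsum m n <= segsum m.-1 n.+1)%VS.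
Proof.
move=> Xt; apply: limg_segsum => j jmn jd.
by rewrite (subv_trans (Xt j jd)) // -segsum_around // segsum_mono //; lia.
Qed.

Lemma lowering_tridiag X c : lowering X c -> tridiag X d W.
Proof.
move=> Xl j jd; apply: subv_trans (limg_unshift (Xl j jd)) _.
rewrite -segsum_around // -{1}(segsum1 jd) Uprev_segsum addvC segsum_cat ?segsum_mono //; lia.
Qed.

Lemma raising_tridiag X c : raising X c -> tridiag X d W.
Proof.
move=> Xr j jd; apply: subv_trans (limg_unshift (Xr j jd)) _.
rewrite -segsum_around // -{1}(segsum1 jd) Unext_segsum segsum_cat ?segsum_mono //; lia.
Qed.

Lemma lowering_segsum X c m n :
  lowering X c -> (X @: segsum m n <= segsum m.-1 n)%VS.
Proof.
move=> Xl; apply: limg_segsum => j jmn jd.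
apply: subv_trans (limg_unshift (Xl j jd)) _.
by rewrite -{1}(segsum1 jd) Uprev_segsum addvC segsum_cat ?segsum_mono //; lia.
Qed.

Lemma raising_segsum X c m n :
  raising X c -> (X @: segsum m n <= segsum m n.+1)%VS.
Proof.
move=> Xr; apply: limg_segsum => j jmn jd.
apply: subv_trans (limg_unshift (Xr j jd)) _.
by rewrite -{1}(segsum1 jd) Unext_segsum segsum_cat ?segsum_mono //; lia.
Qed.

Lemma lowering_segsum_top X c m n :
  lowering X c -> ((X - c n.-1 *: \1)%VF @: segsum m n <= segsum m.-1 n.-1)%VS.
Proof.
move=> Xl; apply: limg_segsum => j jmn jd; case: (ltnP j n.-1) => jn.
  apply: limg_shift; last by apply: segsum_sup => //; lia.
  rewrite -(segsum1 jd); apply: subv_trans (lowering_segsum j j.+1 Xl) _.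
  by apply: segsum_mono; lia.
have <- : j = n.-1 by lia.
by apply: subv_trans (Xl _ jd) _; rewrite Uprev_segsum segsum_mono //; lia.
Qed.

Lemma raising_segsum_bot X c m n :
  raising X c -> ((X - c m *: \1)%VF @: segsum m n <= segsum m.+1 n.+1)%VS.
Proof.
move=> Xr; apply: limg_segsum => j jmn jd; case: (ltnP m j) => mj.
  apply: limg_shift; last by apply: segsum_sup => //; lia.
  rewrite -(segsum1 jd); apply: subv_trans (raising_segsum j j.+1 Xr) _.
  by apply: segsum_mono; lia.
have -> : m = j by lia.
by apply: subv_trans (Xr _ jd) _; rewrite Unext_segsum segsum_mono //; lia.
Qed.

Lemma scalar_segsum_top X c m n :
  scalar_on X c -> ((X - c n.-1 *: \1)%VF @: segsum m n <= segsum m n.-1)%VS.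
Proof.
move=> Xc; apply: limg_segsum => j jmn jd; have XW := scalar_on_shift_eq0 Xc jd.
case: (ltnP j n.-1) => jn; last by rewrite (_ : n.-1 = j) ?XW ?sub0v //; lia.
apply: limg_shift; last by apply: segsum_sup => //; lia.
have /limg_unshift : ((X - c j *: \1)%VF @: W j <= 0)%VS by rewrite XW.
by rewrite addv0 => /subv_trans->//; apply: segsum_sup => //; lia.
Qed.

Lemma scalar_segsum_bot X c m n :
  scalar_on X c -> ((X - c m *: \1)%VF @: segsum m n <= segsum m.+1 n)%VS.
Proof.
move=> Xc; apply: limg_segsum => j jmn jd; have XW := scalar_on_shift_eq0 Xc jd.
case: (ltnP m j) => mj; last by rewrite (_ : m = j) ?XW ?sub0v //; lia.
apply: limg_shift; last by apply: segsum_sup => //; lia.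
have /limg_unshift : ((X - c j *: \1)%VF @: W j <= 0)%VS by rewrite XW.
by rewrite addv0 => /subv_trans->//; apply: segsum_sup => //; lia.
Qed.

Lemma scalar_cap_segsum X c m n j :
  scalar_on X c -> {in [pred i | (i <= d)%N] &, injective c} ->
  (j <= d)%N -> ~~ (m <= j < n)%N -> (W j :&: segsum m n = 0)%VS.
Proof.
move=> Xc c_inj jd; elim: n => [|n IHn] jmn; first by rewrite segsum_eq0 ?capv0 //; lia.
have {}IHn : (W j :&: segsum m n = 0)%VS by apply: IHn; lia.
apply/eqP; rewrite -subv0 -IHn; apply/subvP => v /memv_capP[Wv Sv].
case: (leqP n d) => nd; last by rewrite memv_cap Wv (subvP (@segsum_mono m n.+1 m n _ _)) //; lia.
have /eigspP Xv := subvP (Xc j jd) v Wv.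
have : (c j - c n) *: v \in (W j :&: segsum m n)%VS.
  rewrite memv_cap memvZ //= scalerBl -Xv -shift_lfunE.
  exact: limg_subvP (scalar_segsum_top m n.+1 Xc) v Sv.
rewrite IHn !memv0 scaler_eq0 subr_eq0 => /orP[/eqP/c_inj cjn|//].
have jn := cjn jd nd; move: Sv; rewrite segsum_eq0 ?memv0 //; lia.
Qed.

End Segments.

Lemma eq_Uprev (W W' : nat -> {vspace V}) d j :
  (forall k, (k <= d)%N -> W k = W' k) -> Uprev W d j = Uprev W' d j.
Proof. by case: j => //= j WW'; rewrite /Uat; case: ifP => // /WW'. Qed.

Lemma eq_Unext (W W' : nat -> {vspace V}) d j :
  (forall k, (k <= d)%N -> W k = W' k) -> Unext W d j = Unext W' d j.
Proof. by move=> WW'; rewrite /Unext /Uat; case: ifP => // /WW'. Qed.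
End Subspaces.

Section Eigenspaces.
Variables (K : fieldType) (V : vectType K).
Implicit Types (X : 'End(V)) (W : nat -> {vspace V}).

Lemma eig_ordering_full X d W :
  Defs.diagonalizable X -> eig_ordering X d W -> segsum W d 0 d.+1 = fullv.
Proof.
case=> s Xs [_ _ Wall]; apply/eqP; rewrite eqEsubv subvf /= -Xs.
elim/big_ind: _ => [|U1 U2 U1W U2W|t _]; [exact: sub0v | by rewrite subv_add U1W U2W|].
have [->|t_eig] := eqVneq (eigsp X t) 0%VS; first exact: sub0v.
by have [i iled <-] := Wall t t_eig; apply: segsum_sup.
Qed.

Lemma eig_ordering_eigsp_eq0 X d W f t :
  eig_ordering X d W -> (forall i, (i <= d)%N -> W i = eigsp X (f i)) ->
  (forall i, (i <= d)%N -> f i != t) -> eigsp X t = 0%VS.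
Proof.
case=> _ _ Wall Wf ft; apply/eqP/negPn/negP => t_eig.
have [i iled Wi] := Wall t t_eig.
have /eigspP := memv_pick (eigsp X t).
have /eigspP : vpick (eigsp X t) \in eigsp X (f i) by rewrite -Wf // Wi memv_pick.
move=> -> /eqP; rewrite -subr_eq0 -scalerBl scaler_eq0 subr_eq0 vpick0 (negPf t_eig).
by rewrite orbF (negPf (ft i iled)).
Qed.

End Eigenspaces.

Section QWeyl.
Variables (K : fieldType) (V : vectType K).
Implicit Types (X Y : 'End(V)) (W Z : nat -> {vspace V}).

Definition qWeyl (r ka : K) X Y :=
  forall v, r *: X (Y v) - r^-1 *: Y (X v) = ((r - r^-1) * ka) *: v.

Lemma qWeyl_at X Y r ka al be u :
  r != 0 -> Y u = be *: u ->
  Y (X u - al *: u) = (r ^+ 2 * be) *: (X u - al *: u) -> al * be = ka ->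
  r *: X (Y u) - r^-1 *: Y (X u) = ((r - r^-1) * ka) *: u.
Proof.
move=> r0 Yu; set w := X u - al *: u => Yw <-.
have Xu : X u = al *: u + w by rewrite /w addrC subrK.
clearbody w.
have -> : X (Y u) = be *: X u by rewrite Yu linearZ.
have -> : Y (X u) = al *: Y u + Y w by rewrite Xu linearD linearZ.
rewrite Xu Yu Yw !scalerDr !scalerA opprD addrACA -!scalerBl.
rewrite [X in _ + X *: w](_ : _ = 0) ?scale0r ?addr0; last by field.
by congr (_ *: _); ring.
Qed.

Lemma qWeyl_of_shift Z (Z' : nat -> {vspace V}) d X Y al be r ka :
  r != 0 -> segsum Z d 0 d.+1 = fullv ->
  (forall j, (j <= d)%N -> ((X - al j *: \1)%VF @: Z j <= Z' j)%VS) ->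
  (forall j u, (j <= d)%N -> u \in Z j -> Y u = be j *: u) ->
  (forall j u, (j <= d)%N -> u \in Z' j -> Y u = (r ^+ 2 * be j) *: u) ->
  (forall j, (j <= d)%N -> al j * be j = ka) ->
  qWeyl r ka X Y.
Proof.
move=> r0 Zfull XZ YZ YZ' albe v.
pose F := (r *: (X \o Y) - r^-1 *: (Y \o X) - ((r - r^-1) * ka) *: \1)%VF.
suff : v \in lker F.
  rewrite memv_ker !add_lfunE !opp_lfunE !scale_lfunE !comp_lfunE id_lfunE.
  by rewrite subr_eq0 => /eqP.
rewrite (subvP _ v (memvf v)) // -Zfull; apply: segsum_sub => j _ jd.
apply/subvP => u Zu; rewrite memv_ker !add_lfunE !opp_lfunE !scale_lfunE !comp_lfunE.
rewrite id_lfunE subr_eq0 (qWeyl_at r0 (YZ j u jd Zu) _ (albe j jd)) //.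
by rewrite (YZ' j) // -shift_lfunE; apply: limg_subvP (XZ j jd) u Zu.
Qed.

Lemma qWeyl_of_raising Z d X Y al be r ka :
  r != 0 -> segsum Z d 0 d.+1 = fullv -> raising Z d X al ->
  (forall j u, (j <= d)%N -> u \in Z j -> Y u = be j *: u) ->
  (forall j, (j <= d)%N -> al j * be j = ka) ->
  (forall j, (j < d)%N -> be j.+1 = r ^+ 2 * be j) ->
  qWeyl r ka X Y.
Proof.
move=> r0 Zfull Xr YZ albe be_next.
apply: (qWeyl_of_shift r0 Zfull Xr YZ _ albe) => j u jd; rewrite /Unext /Uat.
case: ifP => [jd' /(YZ _ _ jd')|_]; first by rewrite be_next.
by rewrite memv0 => /eqP->; rewrite linear0 scaler0.
Qed.

Lemma qWeyl_of_lowering Z d X Y al be r ka :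
  r != 0 -> segsum Z d 0 d.+1 = fullv -> lowering Z d X al ->
  (forall j u, (j <= d)%N -> u \in Z j -> Y u = be j *: u) ->
  (forall j, (j <= d)%N -> al j * be j = ka) ->
  (forall j, (0 < j <= d)%N -> be j.-1 = r ^+ 2 * be j) ->
  qWeyl r ka X Y.
Proof.
move=> r0 Zfull Xl YZ albe be_prev.
apply: (qWeyl_of_shift r0 Zfull Xl YZ _ albe) => -[|j] u jd /=.
  by rewrite memv0 => /eqP->; rewrite linear0 scaler0.
by rewrite /Uat ifT => [/(YZ _ _ _)->|]; rewrite -?(be_prev j.+1) //; lia.
Qed.

Lemma qWeyl_eigsp X Y r ka th th' c v :
  qWeyl r ka X Y -> r != 0 -> r ^+ 2 * th' = th -> th * c = ka ->
  v \in eigsp X th -> (Y - c *: \1)%VF v \in eigsp X th'.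
Proof.
move=> XY r0 thE kaE; subst th ka => /eigspP Xv; apply/eigspP; apply: (scalerI r0).
have YZ : Y ((r ^+ 2 * th') *: v) = (r ^+ 2 * th') *: Y v by rewrite linearZ.
have := XY v; rewrite Xv YZ; set y := Y v => Hv.
have rXy : r *: X y = r^-1 *: ((r ^+ 2 * th') *: y) + ((r - r^-1) * (r ^+ 2 * th' * c)) *: v.
  by rewrite -Hv addrC subrK.
rewrite shift_lfunE linearB linearZ /= Xv scalerBr rXy.
rewrite !scalerA -addrA -scalerBl scalerBr !scalerA -scaleNr.
by congr (_ *: _ + _ *: _); field.
Qed.

Lemma lowering_of_qWeyl X Y W d f c r ka :
  eig_ordering X d W -> (forall j, (j <= d)%N -> W j = eigsp X (f j)) ->
  r != 0 -> qWeyl r ka X Y -> (forall j, (j <= d)%N -> f j * c j = ka) ->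
  (forall j, (0 < j <= d)%N -> r ^+ 2 * f j.-1 = f j) ->
  (forall j, (j <= d)%N -> r ^+ 2 * f j != f 0%N) ->
  lowering W d Y c.
Proof.
move=> Xo Wf r0 XY fc f_prev f_out [|j] jd; apply/limg_subvP => v; rewrite Wf // => Wv /=.
  have r2f : r ^+ 2 * (f 0%N / r ^+ 2) = f 0%N by rewrite mulrC divfK ?expf_neq0.
  rewrite -(eig_ordering_eigsp_eq0 (t := f 0%N / r ^+ 2) Xo Wf).
    exact: qWeyl_eigsp XY r0 r2f (fc _ jd) Wv.
  by move=> i iled; apply: contraNneq (f_out i iled) => ->; rewrite r2f.
by rewrite /Uat ifT ?Wf; [apply: qWeyl_eigsp XY r0 (f_prev _ _) (fc _ _) Wv | lia..].
Qed.

Lemma raising_of_qWeyl X Y W d f c r ka :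
  eig_ordering X d W -> (forall j, (j <= d)%N -> W j = eigsp X (f j)) ->
  r != 0 -> qWeyl r ka X Y -> (forall j, (j <= d)%N -> f j * c j = ka) ->
  (forall j, (j < d)%N -> r ^+ 2 * f j.+1 = f j) ->
  (forall j, (j <= d)%N -> r ^+ 2 * f j != f d) ->
  raising W d Y c.
Proof.
move=> Xo Wf r0 XY fc f_next f_out j jd; apply/limg_subvP => v; rewrite Wf // => Wv.
rewrite /Unext /Uat; case: ifP => jd'.
  by rewrite Wf //; apply: qWeyl_eigsp XY r0 (f_next _ _) (fc _ _) Wv.
have jE : j = d by lia.
have r2f : r ^+ 2 * (f d / r ^+ 2) = f d by rewrite mulrC divfK ?expf_neq0.
rewrite -(eig_ordering_eigsp_eq0 (t := f d / r ^+ 2) Xo Wf).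
  by rewrite jE in jd Wv *; apply: qWeyl_eigsp XY r0 r2f (fc _ jd) Wv.
by move=> i iled; apply: contraNneq (f_out i iled) => ->; rewrite r2f.
Qed.

End QWeyl.

Section NonRootOfUnity.
Variables (K : fieldType) (q : K).
Hypothesis q0 : q != 0.

Lemma mulr_exprzCA (c : K) (k x : int) : q ^ k * (c * q ^ x) = c * q ^ (k + x).
Proof. by rewrite mulrCA -expfzDr. Qed.

Lemma mulr_exprzACA (c1 c2 : K) (x y : int) :
  c1 * q ^ x * (c2 * q ^ y) = c1 * c2 * q ^ (x + y).
Proof. by rewrite mulrACA -expfzDr. Qed.

Lemma mulr_exprnCA (c : K) (n : nat) (x : int) : q ^+ n * (c * q ^ x) = c * q ^ (n%:Z + x).
Proof. exact: (mulr_exprzCA c n x). Qed.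

Lemma scale_exprz0 (c : K) (x : int) : x = 0 -> c * q ^ x = c.
Proof. by move->; rewrite mulr1. Qed.

Lemma expr2Vz : q^-1 ^+ 2 = q ^ (-2).
Proof. exact: exprz_inv q 2. Qed.

Hypothesis q_nonroot : forall n : nat, (0 < n)%N -> q ^+ n != 1.

Lemma exprz_inj : injective (fun x : int => q ^ x).
Proof.
move=> x y /= qxy; apply/eqP; rewrite -subr_eq0; apply/eqP.
have : q ^ (x - y) = 1 by rewrite expfzDr // -invr_expz qxy divff // expfz_neq0.
case: (x - y) => [[|n]|n] // qn; have := q_nonroot (ltn0Sn n).
  by change (q ^+ n.+1 = 1) in qn; rewrite qn eqxx.
by change ((q ^+ n.+1)^-1 = 1) in qn; rewrite -[q ^+ _]invrK qn invr1 eqxx.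
Qed.

Lemma mulr_exprz_neq (c : K) (x y : int) : c != 0 -> x != y -> c * q ^ x != c * q ^ y.
Proof. by move=> c0; apply: contra => /eqP/(mulfI c0)/exprz_inj->. Qed.

End NonRootOfUnity.

Section TDPair.
Variables (K : closedFieldType) (V : vectType K) (q a as_ b bs : K)
  (A As B Bs : 'End(V)) (d : nat) (Vs Vss : nat -> {vspace V}).
Hypotheses (q0 : q != 0) (q_nonroot : forall n : nat, (0 < n)%N -> q ^+ n != 1)
  (a0 : a != 0) (as0 : as_ != 0)
  (TD : TD_pair A As) (SO : standard_orderings A As d Vs Vss)
  (VsE : forall i, (i <= d)%N -> Vs i = eigsp A (a * qpow q d i))
  (VssE : forall i, (i <= d)%N -> Vss i = eigsp As (as_ * qpowr q d i))
  (B0s0 : forall i v, (i <= d)%N -> v \in dec_0s0 Vs Vss d i -> B v = (b * qpow q d i) *: v)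
  (BsDsD : forall i v, (i <= d)%N -> v \in dec_DsD Vs Vss d i -> Bs v = (bs * qpowr q d i) *: v).

Let theta j := a * qpow q d j.
Let theta_s j := as_ * qpowr q d j.

Lemma Vs_ordering : eig_ordering A d Vs. Proof. by case: SO. Qed.
Lemma Vss_ordering : eig_ordering As d Vss. Proof. by case: SO. Qed.
Lemma A_tridiag : tridiag A d Vss. Proof. by case: SO. Qed.
Lemma As_tridiag : tridiag As d Vs. Proof. by case: SO. Qed.

Lemma A_scalar : scalar_on Vs d A theta.
Proof. by move=> j jd; rewrite VsE. Qed.

Lemma As_scalar : scalar_on Vss d As theta_s.
Proof. by move=> j jd; rewrite VssE. Qed.

Lemma theta_inj : {in [pred i | (i <= d)%N] &, injective theta}.
Proof. by move=> i j /= iled jd /(mulfI a0)/(exprz_inj q0 q_nonroot); lia. Qed.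

Lemma Vss_neq0 j : (j <= d)%N -> Vss j != 0%VS.
Proof. by case: Vss_ordering => Vss_eig _ _ /Vss_eig[th []]. Qed.

Lemma Vs_neq0 j : (j <= d)%N -> Vs j != 0%VS.
Proof. by case: Vs_ordering => Vs_eig _ _ /Vs_eig[th []]. Qed.

Lemma Vs_full : segsum Vs d 0 d.+1 = fullv.
Proof. by case: TD => A_diag *; apply: eig_ordering_full A_diag Vs_ordering. Qed.

Lemma raising_lowering_segsum_cases Z cA cAs :
  raising Z d A cA -> lowering Z d As cAs ->
  segsum Z d 0 d.+1 = 0%VS \/ segsum Z d 0 d.+1 = fullv.
Proof.
move=> /raising_tridiag Ar /lowering_tridiag Asl; case: TD => _ _ _ _; apply.
  by apply: subv_trans (tridiag_segsum 0 d.+1 Ar) _; apply: segsum_mono; lia.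
by apply: subv_trans (tridiag_segsum 0 d.+1 Asl) _; apply: segsum_mono; lia.
Qed.

Definition cell m1 n1 m2 n2 := (segsum Vss d m1 n1 :&: segsum Vs d m2 n2)%VS.

Lemma cell_mono m1 n1 m2 n2 m1' n1' m2' n2' :
  (m1' <= m1)%N -> (minn n1 d.+1 <= n1')%N -> (m2' <= m2)%N -> (minn n2 d.+1 <= n2')%N ->
  (cell m1 n1 m2 n2 <= cell m1' n1' m2' n2')%VS.
Proof. by move=> *; apply: capvS; apply: segsum_mono. Qed.

Lemma cell_sub0 m1 n1 m2 n2 :
  (minn n1 d.+1 <= m1)%N || (minn n2 d.+1 <= m2)%N -> (cell m1 n1 m2 n2 <= 0)%VS.
Proof. by rewrite /cell; case/orP => /segsum_eq0->; rewrite ?cap0v ?capv0. Qed.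

Ltac cell_bounds := solve [ apply: cell_mono; lia | apply: cell_sub0; lia ].

Lemma limg_cell f m1 n1 m2 n2 m1' n1' m2' n2' :
  (f @: segsum Vss d m1 n1 <= segsum Vss d m1' n1')%VS ->
  (f @: segsum Vs d m2 n2 <= segsum Vs d m2' n2')%VS ->
  (f @: cell m1 n1 m2 n2 <= cell m1' n1' m2' n2')%VS.
Proof. exact: limg_capS. Qed.

Lemma A_cell_top m1 n1 m2 n2 :
  ((A - theta n2.-1 *: \1)%VF @: cell m1 n1 m2 n2 <= cell m1.-1 n1.+1 m2 n2.-1)%VS.
Proof.
apply: limg_cell; last exact: scalar_segsum_top A_scalar.
by apply: limg_shift (tridiag_segsum _ _ A_tridiag) _; apply: segsum_mono; lia.
Qed.

Lemma A_cell_bot m1 n1 m2 n2 :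
  ((A - theta m2 *: \1)%VF @: cell m1 n1 m2 n2 <= cell m1.-1 n1.+1 m2.+1 n2)%VS.
Proof.
apply: limg_cell; last exact: scalar_segsum_bot A_scalar.
by apply: limg_shift (tridiag_segsum _ _ A_tridiag) _; apply: segsum_mono; lia.
Qed.

Lemma As_cell_top m1 n1 m2 n2 :
  ((As - theta_s n1.-1 *: \1)%VF @: cell m1 n1 m2 n2 <= cell m1 n1.-1 m2.-1 n2.+1)%VS.
Proof.
apply: limg_cell; first exact: scalar_segsum_top As_scalar.
by apply: limg_shift (tridiag_segsum _ _ As_tridiag) _; apply: segsum_mono; lia.
Qed.

Lemma As_cell_bot m1 n1 m2 n2 :
  ((As - theta_s m1 *: \1)%VF @: cell m1 n1 m2 n2 <= cell m1.+1 n1 m2.-1 n2.+1)%VS.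
Proof.
apply: limg_cell; first exact: scalar_segsum_bot As_scalar.
by apply: limg_shift (tridiag_segsum _ _ As_tridiag) _; apply: segsum_mono; lia.
Qed.

Definition U0s0 j := cell 0 j.+1 0 (d - j).+1.
Definition UDsD j := cell (d - j) d.+1 j d.+1.

Lemma A_raising_U0s0 : raising U0s0 d A (fun j => theta (d - j)).
Proof.
move=> j jd; apply: subv_trans (A_cell_top 0 j.+1 0 (d - j).+1) _.
by apply: subv_Unext => ?; rewrite /U0s0; cell_bounds.
Qed.

Lemma As_lowering_U0s0 : lowering U0s0 d As theta_s.
Proof.
move=> j jd; apply: subv_trans (As_cell_top 0 j.+1 0 (d - j).+1) _.
by apply: subv_Uprev => // [k jE|j0]; rewrite /U0s0; cell_bounds.
Qed.

Lemma A_raising_UDsD : raising UDsD d A theta.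
Proof.
move=> j jd; apply: subv_trans (A_cell_bot (d - j) d.+1 j d.+1) _.
by apply: subv_Unext => ?; rewrite /UDsD; cell_bounds.
Qed.

Lemma As_lowering_UDsD : lowering UDsD d As (fun j => theta_s (d - j)).
Proof.
move=> j jd; apply: subv_trans (As_cell_bot (d - j) d.+1 j d.+1) _.
by apply: subv_Uprev => // [k jE|j0]; rewrite /UDsD; cell_bounds.
Qed.

Lemma raising_lowering_segsum_full Z cA cAs j :
  raising Z d A cA -> lowering Z d As cAs -> (j <= d)%N -> Z j != 0%VS ->
  segsum Z d 0 d.+1 = fullv.
Proof.
move=> Ar Asl jd Zj; case: (raising_lowering_segsum_cases Ar Asl) => // Z0.
by move: Zj; rewrite -subv0 -Z0 segsum_sup.
Qed.

Lemma raising_lowering_segsum_eq0 Z cA cAs m n j :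
  raising Z d A cA -> lowering Z d As cAs -> (j <= d)%N -> ~~ (m <= j < n)%N ->
  (forall k, (k <= d)%N -> (Z k <= segsum Vs d m n)%VS) -> segsum Z d 0 d.+1 = 0%VS.
Proof.
move=> Ar Asl jd jmn ZVs; case: (raising_lowering_segsum_cases Ar Asl) => // Zfull.
have /capv_idPl : (Vs j <= segsum Vs d m n)%VS.
  by rewrite (subv_trans (subvf _)) // -Zfull; apply: segsum_sub => k _; apply: ZVs.
rewrite (scalar_cap_segsum A_scalar theta_inj jd jmn) => Vs0.
by move: (Vs_neq0 jd); rewrite -Vs0 eqxx.
Qed.

Lemma U0s0_full : segsum U0s0 d 0 d.+1 = fullv.
Proof.
apply: (raising_lowering_segsum_full A_raising_U0s0 As_lowering_U0s0 (leq0n d)).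
by rewrite /U0s0 /cell subn0 Vs_full capvf segsum1 // Vss_neq0.
Qed.

Lemma UDsD_full : segsum UDsD d 0 d.+1 = fullv.
Proof.
apply: (raising_lowering_segsum_full A_raising_UDsD As_lowering_UDsD (leq0n d)).
by rewrite /UDsD /cell subn0 Vs_full capvf segsum1 // Vss_neq0.
Qed.

Lemma cell_0s0_eq0 k : cell 0 k.+1 0 (d - k) = 0%VS.
Proof.
pose Z j := cell 0 j.+1 0 (d - j).
apply/eqP; rewrite -subv0 -(raising_lowering_segsum_eq0 (Z := Z)
  (cA := fun j => theta (d - j).-1) (cAs := theta_s) (m := 0) (n := d) (j := d)) //.
- case: (leqP k d) => kd; first by apply: (segsum_sup Z); lia.
  by apply: subv_trans _ (sub0v _); cell_bounds.
- move=> j jd; apply: subv_trans (A_cell_top 0 j.+1 0 (d - j)) _.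
  by apply: subv_Unext => ?; rewrite /Z; cell_bounds.
- move=> j jd; apply: subv_trans (As_cell_top 0 j.+1 0 (d - j)) _.
  by apply: subv_Uprev => // [i jE|j0]; rewrite /Z; cell_bounds.
- by rewrite ltnn andbF.
- by move=> j jd; apply: subv_trans (capvSr _ _) _; apply: segsum_mono; lia.
Qed.

Lemma cell_DsD_eq0 k : cell (d - k) d.+1 k.+1 d.+1 = 0%VS.
Proof.
pose Z j := cell (d - j) d.+1 j.+1 d.+1.
apply/eqP; rewrite -subv0 -(raising_lowering_segsum_eq0 (Z := Z)
  (cA := fun j => theta j.+1) (cAs := fun j => theta_s (d - j)) (m := 1) (n := d.+1) (j := 0)) //.
- case: (leqP k d) => kd; first by apply: (segsum_sup Z); lia.
  by apply: subv_trans _ (sub0v _); cell_bounds.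
- move=> j jd; apply: subv_trans (A_cell_bot (d - j) d.+1 j.+1 d.+1) _.
  by apply: subv_Unext => ?; rewrite /Z; cell_bounds.
- move=> j jd; apply: subv_trans (As_cell_bot (d - j) d.+1 j.+1 d.+1) _.
  by apply: subv_Uprev => // [i jE|j0]; rewrite /Z; cell_bounds.
- by move=> j jd; apply: subv_trans (capvSr _ _) _; apply: segsum_mono; lia.
Qed.

Lemma segsum_U0s0_Vss m n : (segsum U0s0 d m n <= segsum Vss d 0 n)%VS.
Proof.
by apply: segsum_sub => j jmn jd; apply: subv_trans (capvSl _ _) _; apply: segsum_mono; lia.
Qed.

Lemma segsum_U0s0_Vs m n : (segsum U0s0 d m n <= segsum Vs d 0 (d.+1 - m))%VS.
Proof.
by apply: segsum_sub => j jmn jd; apply: subv_trans (capvSr _ _) _; apply: segsum_mono; lia.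
Qed.

Lemma segsum_UDsD_Vss m n : (segsum UDsD d m n <= segsum Vss d (d.+1 - n) d.+1)%VS.
Proof.
by apply: segsum_sub => j jmn jd; apply: subv_trans (capvSl _ _) _; apply: segsum_mono; lia.
Qed.

Lemma segsum_UDsD_Vs m n : (segsum UDsD d m n <= segsum Vs d m d.+1)%VS.
Proof.
by apply: segsum_sub => j jmn jd; apply: subv_trans (capvSr _ _) _; apply: segsum_mono; lia.
Qed.

Lemma dec_0s0E j : (j <= d)%N -> dec_0s0 Vs Vss d j = U0s0 j.
Proof. by move=> jd; rewrite /dec_0s0 !(@sumv_ord_segsum _ _ _ d) //; lia. Qed.

Lemma dec_DsDE j : (j <= d)%N -> dec_DsD Vs Vss d j = UDsD j.
Proof. by move=> jd; rewrite /dec_DsD !(@sumv_segsum _ _ _ d). Qed.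

Lemma dec_0sDE j : (j <= d)%N -> dec_0sD Vs Vss d j = cell 0 j.+1 j d.+1.
Proof.
by move=> jd; rewrite /dec_0sD (@sumv_ord_segsum _ _ _ d) ?(@sumv_segsum _ _ _ d) //; lia.
Qed.

Lemma dec_Ds0E j : (j <= d)%N -> dec_Ds0 Vs Vss d j = cell (d - j) d.+1 0 (d - j).+1.
Proof.
by move=> jd; rewrite /dec_Ds0 (@sumv_ord_segsum _ _ _ d) ?(@sumv_segsum _ _ _ d) //; lia.
Qed.

Lemma B_U0s0 j u : (j <= d)%N -> u \in U0s0 j -> B u = (b * qpow q d j) *: u.
Proof. by move=> jd; rewrite -dec_0s0E //; apply: B0s0. Qed.

Lemma Bs_UDsD j u : (j <= d)%N -> u \in UDsD j -> Bs u = (bs * qpowr q d j) *: u.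
Proof. by move=> jd; rewrite -dec_DsDE //; apply: BsDsD. Qed.

(* The eigenvalue identities below compare monomials c * q ^ e; the power laws reduce them to
   linear arithmetic on the exponents. *)
Ltac qpow_arith :=
  rewrite /= /theta /theta_s /qpow /qpowr ?expr2Vz ?(mulr_exprnCA q0) ?(mulr_exprzCA q0)
    ?(mulr_exprzACA q0);
  solve [ rewrite scale_exprz0 //; lia | congr (_ * q ^ _); lia
        | rewrite (mulr_exprz_neq q0 q_nonroot) //; lia ].

Lemma qWeyl_A_B : qWeyl q (a * b) A B.
Proof.
by apply: (qWeyl_of_raising q0 U0s0_full A_raising_U0s0 B_U0s0) => j jd; qpow_arith.
Qed.

Lemma qWeyl_As_B : qWeyl q^-1 (as_ * b) As B.
Proof.
by apply: (qWeyl_of_lowering (invr_neq0 q0) U0s0_full As_lowering_U0s0 B_U0s0) => j jd;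
  qpow_arith.
Qed.

Lemma qWeyl_A_Bs : qWeyl q^-1 (a * bs) A Bs.
Proof.
by apply: (qWeyl_of_raising (invr_neq0 q0) UDsD_full A_raising_UDsD Bs_UDsD) => j jd;
  qpow_arith.
Qed.

Lemma qWeyl_As_Bs : qWeyl q (as_ * bs) As Bs.
Proof.
by apply: (qWeyl_of_lowering q0 UDsD_full As_lowering_UDsD Bs_UDsD) => j jd; qpow_arith.
Qed.

Lemma B_lowering_Vs : lowering Vs d B (fun j => b * qpowr q d j).
Proof.
by apply: (lowering_of_qWeyl Vs_ordering VsE q0 qWeyl_A_B) => j jd; qpow_arith.
Qed.

Lemma Bs_raising_Vs : raising Vs d Bs (fun j => bs * qpowr q d j).
Proof.
by apply: (raising_of_qWeyl Vs_ordering VsE (invr_neq0 q0) qWeyl_A_Bs) => j jd;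
  qpow_arith.
Qed.

Lemma B_lowering_Vss : lowering Vss d B (fun j => b * qpow q d j).
Proof.
by apply: (lowering_of_qWeyl Vss_ordering VssE (invr_neq0 q0) qWeyl_As_B) => j jd;
  qpow_arith.
Qed.

Lemma Bs_raising_Vss : raising Vss d Bs (fun j => bs * qpow q d j).
Proof.
by apply: (raising_of_qWeyl Vss_ordering VssE q0 qWeyl_As_Bs) => j jd; qpow_arith.
Qed.

Lemma B_lowering_0sD : lowering (dec_0sD Vs Vss d) d B (fun j => b * qpow q d j).
Proof.
move=> i iled; rewrite (eq_Uprev _ dec_0sDE) dec_0sDE //.
apply: subv_trans (limg_cell (lowering_segsum_top 0 i.+1 B_lowering_Vss)
  (limg_shift (lowering_segsum i d.+1 B_lowering_Vs) (segsum_mono _ _ _))) _; try lia.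
by apply: subv_Uprev => // [k iE|i0]; cell_bounds.
Qed.

Lemma Bs_raising_0sD : raising (dec_0sD Vs Vss d) d Bs (fun j => bs * qpowr q d j).
Proof.
move=> i iled; rewrite (eq_Unext _ dec_0sDE) dec_0sDE //.
apply: subv_trans (limg_cell
  (limg_shift (raising_segsum 0 i.+1 Bs_raising_Vss) (segsum_mono _ _ _))
  (raising_segsum_bot i d.+1 Bs_raising_Vs)) _; try lia.
by apply: subv_Unext => ?; cell_bounds.
Qed.

Lemma B_raising_Ds0 : raising (dec_Ds0 Vs Vss d) d B (fun j => b * qpow q d j).
Proof.
move=> i iled; rewrite (eq_Unext _ dec_Ds0E) dec_Ds0E //.
have -> : qpow q d i = qpowr q d (d - i) by rewrite /qpow /qpowr; congr (q ^ _); lia.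
apply: subv_trans (limg_cell
  (limg_shift (lowering_segsum (d - i) d.+1 B_lowering_Vss) (segsum_mono _ _ _))
  (lowering_segsum_top 0 (d - i).+1 B_lowering_Vs)) _; try lia.
by apply: subv_Unext => ?; cell_bounds.
Qed.

Lemma Bs_lowering_Ds0 : lowering (dec_Ds0 Vs Vss d) d Bs (fun j => bs * qpowr q d j).
Proof.
move=> i iled; rewrite (eq_Uprev _ dec_Ds0E) dec_Ds0E //.
have -> : qpowr q d i = qpow q d (d - i) by rewrite /qpow /qpowr; congr (q ^ _); lia.
apply: subv_trans (limg_cell (raising_segsum_bot (d - i) d.+1 Bs_raising_Vss)
  (limg_shift (raising_segsum 0 (d - i).+1 Bs_raising_Vs) (segsum_mono _ _ _))) _; try lia.
by apply: subv_Uprev => // [k iE|i0]; cell_bounds.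
Qed.

Lemma Bs_tridiag_0s0 : tridiag Bs d (dec_0s0 Vs Vss d).
Proof.
move=> i iled; rewrite (eq_Uprev _ dec_0s0E) (eq_Unext _ dec_0s0E) dec_0s0E //.
apply: subv_trans (limg_cell (raising_segsum 0 i.+1 Bs_raising_Vss)
  (raising_segsum 0 (d - i).+1 Bs_raising_Vs)) _.
apply: segsum_cap_around U0s0_full _ _ _ _ => //.
- exact: segsum_U0s0_Vss.
- by apply: subv_trans (segsum_U0s0_Vs _ _) _; apply: segsum_mono; lia.
- apply/eqP; rewrite -subv0 -(cell_0s0_eq0 i.+1).
  by apply: capvS (subvv _) _; rewrite -subSS; apply: segsum_U0s0_Vs.
apply/eqP; rewrite -subv0; apply: subv_trans (capvS (segsum_U0s0_Vss _ _) (subvv _)) _.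
case: (leqP 2 i) => i2; last by cell_bounds.
by rewrite -(cell_0s0_eq0 (i - 2)); cell_bounds.
Qed.

Lemma B_tridiag_DsD : tridiag B d (dec_DsD Vs Vss d).
Proof.
move=> i iled; rewrite (eq_Uprev _ dec_DsDE) (eq_Unext _ dec_DsDE) dec_DsDE //.
apply: subv_trans (limg_cell (lowering_segsum (d - i) d.+1 B_lowering_Vss)
  (lowering_segsum i d.+1 B_lowering_Vs)) _.
apply: segsum_cap_around UDsD_full _ _ _ _ => //.
- by apply: subv_trans (segsum_UDsD_Vss _ _) _; apply: segsum_mono; lia.
- exact: segsum_UDsD_Vs.
- apply/eqP; rewrite -subv0 -(cell_DsD_eq0 i.+1).
  by apply: subv_trans (capvS (subvv _) (segsum_UDsD_Vs _ _)) _; cell_bounds.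
apply/eqP; rewrite -subv0; apply: subv_trans (capvS (segsum_UDsD_Vss _ _) (subvv _)) _.
case: (leqP 2 i) => i2; last by cell_bounds.
by rewrite -(cell_DsD_eq0 (i - 2)); cell_bounds.
Qed.

End TDPair.

Theorem theorem8p1 (K : closedFieldType) (V : vectType K)
    (q a as_ b bs : K) (A As B Bs : 'End(V)) (d : nat)
    (Vs Vss : nat -> {vspace V}) :
  (0 < \dim {:V})%N ->
  q != 0 -> (forall n : nat, (0 < n)%N -> q ^+ n != 1) ->
  a != 0 -> as_ != 0 -> b != 0 -> bs != 0 ->
  TD_pair A As ->
  standard_orderings A As d Vs Vss ->
  (forall i, (i <= d)%N -> Vs i = eigsp A (a * qpow q d i)) ->
  (forall i, (i <= d)%N -> Vss i = eigsp As (as_ * qpowr q d i)) ->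
  (forall i v, (i <= d)%N -> v \in dec_0s0 Vs Vss d i ->
      B v = (b * qpow q d i) *: v) ->
  (forall i v, (i <= d)%N -> v \in dec_DsD Vs Vss d i ->
      Bs v = (bs * qpowr q d i) *: v) ->
  let U := dec_0D Vs Vss d in
  let U0 := dec_0sDs Vs Vss d in
  let U1 := dec_0sD Vs Vss d in
  let U2 := dec_0s0 Vs Vss d in
  let U3 := dec_Ds0 Vs Vss d in
  let U4 := dec_DsD Vs Vss d in
  (* [0D] *)
      (forall i, (i <= d)%N ->
        ((B - (b * qpowr q d i) *: \1)%VF @: U i <= Uprev U d i)%VS /\
        ((Bs - (bs * qpowr q d i) *: \1)%VF @: U i <= Unext U d i)%VS) /\
      (* [0*D*] *)
      (forall i, (i <= d)%N ->
        ((B - (b * qpow q d i) *: \1)%VF @: U0 i <= Uprev U0 d i)%VS /\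
        ((Bs - (bs * qpow q d i) *: \1)%VF @: U0 i <= Unext U0 d i)%VS) /\
      (* [0*D] *)
      (forall i, (i <= d)%N ->
        ((B - (b * qpow q d i) *: \1)%VF @: U1 i <= Uprev U1 d i)%VS /\
        ((Bs - (bs * qpowr q d i) *: \1)%VF @: U1 i <= Unext U1 d i)%VS) /\
      (* [0*0] *)
      (forall i, (i <= d)%N ->
        ((B - (b * qpow q d i) *: \1)%VF @: U2 i = 0)%VS /\
        (Bs @: U2 i <= Uprev U2 d i + U2 i + Unext U2 d i)%VS) /\
      (* [D*0] *)
      (forall i, (i <= d)%N ->
        ((B - (b * qpow q d i) *: \1)%VF @: U3 i <= Unext U3 d i)%VS /\
        ((Bs - (bs * qpowr q d i) *: \1)%VF @: U3 i <= Uprev U3 d i)%VS) /\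
      (* [D*D] *)
      (forall i, (i <= d)%N ->
        (B @: U4 i <= Uprev U4 d i + U4 i + Unext U4 d i)%VS /\
        ((Bs - (bs * qpowr q d i) *: \1)%VF @: U4 i = 0)%VS).
Proof.
move=> _ q0 qnr a0 as0 _ _ TD SO VsE VssE B0s0 BsDsD U U0 U1 U2 U3 U4.
have B_Vs := B_lowering_Vs q0 qnr a0 as0 TD SO VsE VssE B0s0.
have Bs_Vs := Bs_raising_Vs q0 qnr a0 as0 TD SO VsE VssE BsDsD.
have B_Vss := B_lowering_Vss q0 qnr a0 as0 TD SO VsE VssE B0s0.
have Bs_Vss := Bs_raising_Vss q0 qnr a0 as0 TD SO VsE VssE BsDsD.
have B_0sD := B_lowering_0sD q0 qnr a0 as0 TD SO VsE VssE B0s0.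
have Bs_0sD := Bs_raising_0sD q0 qnr a0 as0 TD SO VsE VssE BsDsD.
have B_Ds0 := B_raising_Ds0 q0 qnr a0 as0 TD SO VsE VssE B0s0.
have Bs_Ds0 := Bs_lowering_Ds0 q0 qnr a0 as0 TD SO VsE VssE BsDsD.
have Bs_0s0 := Bs_tridiag_0s0 q0 qnr a0 as0 TD SO VsE VssE BsDsD.
have B_DsD := B_tridiag_DsD q0 qnr a0 as0 TD SO VsE VssE B0s0.
split; [|split; [|split; [|split; [|split]]]] => i iled.
- by split; [apply: B_Vs | apply: Bs_Vs].
- by split; [apply: B_Vss | apply: Bs_Vss].
- by split; [apply: B_0sD | apply: Bs_0sD].
- by split; [apply: limg_shift_eq0 => v; apply: B0s0 | apply: Bs_0s0].
- by split; [apply: B_Ds0 | apply: Bs_Ds0].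
- by split; [apply: B_DsD | apply: limg_shift_eq0 => v; apply: BsDsD].
Qed.
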